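(* A connected finite simple graph $G$ is zero--M--cordial if and only if $G$ is Eulerian (every vertex has even degree) and $G$ has an even number of edges.
   Context: A labeling of a graph $G$ is a map $f:E(G)\to\{-1,+1\}$; for each vertex $v$ set $f(v)=\sum_{e\in I(v)} f(e)$, where $I(v)$ is the set of edges incident to $v$. A labeling $f$ is zero--M--cordial if $f(v)=0$ for every vertex $v$. A graph is zero--M--cordial if it admits a zero--M--cordial labeling. *)

From mathcomp Require Import all_boot all_order all_algebra.
Set Implicit Arguments. Unset Strict Implicit. Unset Printing Implicit Defensive.
Import Order.TTheory GRing.Theory Num.Theory.

Definition simple_graph (T : finType) (e : rel T) : Prop :=
  symmetric e /\ irreflexive e.

Definition edges (T : finType) (e : rel T) : {set {set T}} :=
  [set [set x; y] | x in T, y in [pred y | e x y]].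

Definition deg (T : finType) (e : rel T) (v : T) : nat := #|[set y | e v y]|.

Definition connected_graph (T : finType) (e : rel T) : Prop :=
  forall x y : T, connect e x y.

Definition eulerian (T : finType) (e : rel T) : Prop :=
  forall v : T, ~~ odd (deg e v).

Definition vertex_label (T : finType) (e : rel T) (f : {set T} -> int) (v : T)
  : int := (\sum_(E in edges e | v \in E) f E)%R.

Definition zero_M_cordial_labeling (T : finType) (e : rel T)
  (f : {set T} -> int) : Prop :=
  (forall E, E \in edges e -> f E = 1%R \/ f E = (-1)%R) /\
  (forall v : T, vertex_label e f v = 0%R).

Definition zero_M_cordial (T : finType) (e : rel T) : Prop :=
  exists f : {set T} -> int, zero_M_cordial_labeling e f.

From mathcomp Require Import all_boot all_order all_algebra.
From mathcomp Require Import ring zify.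
Set Implicit Arguments. Unset Strict Implicit. Unset Printing Implicit Defensive.
Import Order.TTheory GRing.Theory Num.Theory.

(* A zero-M-cordial labeling makes the +1 and -1 edges at each vertex equal in
   number, so every degree is even; summing all vertex labels counts every edge
   twice, so the labels themselves sum to 0 and there are evenly many edges.
   Conversely, a connected graph with all degrees even has an Euler circuit: a
   longest trail returns to its start by parity, and an unused edge at any of
   its vertices would give a longer trail after rotating the circuit. Labeling
   the edges of the circuit alternately +1, -1 makes the two edges of each
   passage through a vertex cancel, and the first and last edges, which meet at
   the start vertex, carry opposite signs because their number is even. *)

Lemma sum_signs_eq0_card_even (I : finType) (P : pred I) (F : I -> int) :
  (forall i, P i -> F i = 1%R \/ F i = (-1)%R) -> (\sum_(i | P i) F i = 0)%R ->
  ~~ odd #|P|.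
Proof.
move=> F_sign.
have -> : (\sum_(i | P i) F i = \sum_(i | P i) (1 - ((F i == -1) : nat)%:R *+ 2))%R.
  by apply: eq_bigr => i /F_sign[->|->].
rewrite sumrB sumrMnl -natr_sum (eq_bigl (mem P)) // sumr_const.
by move/eqP; rewrite subr_eq0 -mulrnA eqr_nat => /eqP ->; rewrite oddM andbF.
Qed.

Lemma card_in_uniq_count (T : finType) (s : seq T) (P : pred T) : uniq s ->
  #|[pred x | (x \in s) && P x]| = count P s.
Proof.
move=> s_uniq; rewrite -size_filter -(card_uniqP (filter_uniq P s_uniq)).
by apply: eq_card => x; rewrite /= mem_filter andbC.
Qed.

Section Graph.
Variables (T : finType) (e : rel T).
Hypotheses (e_sym : symmetric e) (e_irr : irreflexive e).

Lemma edgesP E : reflect (exists a b, e a b /\ E = [set a; b]) (E \in edges e).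
Proof.
apply: (iffP imset2P) => [[a b _]|[a [b [eab ->]]]].
  by rewrite inE => eab ->; exists a, b.
by exists a b.
Qed.

Lemma edge_neq a b : e a b -> a != b.
Proof. by apply: contraTneq => ->; rewrite e_irr. Qed.

Lemma deg_eq_card_incident (S : pred {set T}) v :
  (forall E, S E -> E \in edges e) -> (forall y, e v y -> S [set v; y]) ->
  deg e v = #|[pred E | S E && (v \in E)]|.
Proof.
move=> S_edges S_at_v; rewrite /deg -(@card_in_imset _ _ (fun y => [set v; y])).
  apply: eq_card => E; apply/imsetP/andP.
    case=> y; rewrite inE => vy ->; split; first exact: S_at_v.
    by rewrite !inE eqxx.
  case=> /[dup] SE /S_edges/edgesP[a [b [eab ->]]]; rewrite !inE.
  case/orP=> /eqP va; first by exists b; rewrite ?inE va.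
  by exists a; [rewrite inE va e_sym | rewrite va setUC].
move=> y1 y2; rewrite !inE => vy1 vy2 eq12.
have : y1 \in [set v; y2] by rewrite -eq12 !inE eqxx orbT.
rewrite !inE => /orP[/eqP y1v|/eqP //].
by move: vy1; rewrite y1v e_irr.
Qed.

Lemma sum_vertex_label (f : {set T} -> int) :
  (\sum_v vertex_label e f v = (\sum_(E in edges e) f E) *+ 2)%R.
Proof.
rewrite /vertex_label.
rewrite (eq_bigr (fun v => \sum_(E in edges e) (if v \in E then f E else 0))%R);
  last by move=> v _; rewrite big_mkcondr.
rewrite exchange_big /= -sumrMnl; apply: eq_bigr => E /edgesP[a [b [eab ->]]].
by rewrite -big_mkcond /= sumr_const cards2 edge_neq.
Qed.

Lemma zero_M_cordial_labeling_eulerian f :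
  zero_M_cordial_labeling e f -> eulerian e.
Proof.
move=> [f_sign f_zero] v.
rewrite (deg_eq_card_incident (S := mem (edges e))) // => [|y vy];
  last by apply/edgesP; exists v, y.
apply: (sum_signs_eq0_card_even (P := [pred E | (E \in edges e) && (v \in E)])).
  by move=> E /andP[+ _]; apply: f_sign.
exact: f_zero.
Qed.

Lemma zero_M_cordial_labeling_even_edges f :
  zero_M_cordial_labeling e f -> ~~ odd #|edges e|.
Proof.
case=> f_sign f_zero; apply: (sum_signs_eq0_card_even (P := mem (edges e)) f_sign).
have := sum_vertex_label f; rewrite big1 => [|v _]; last exact: f_zero.
by move/esym/eqP; rewrite mulrn_eq0 => /eqP.
Qed.

Fixpoint walk_edges (x : T) (p : seq T) : seq {set T} :=
  if p is y :: p' then [set x; y] :: walk_edges y p' else [::].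

Definition trail x p := path e x p && uniq (walk_edges x p).

Definition saturated_walk x p :=
  forall w y, w \in x :: p -> e w y -> [set w; y] \in walk_edges x p.

Lemma size_walk_edges x p : size (walk_edges x p) = size p.
Proof. by elim: p x => //= y p IH x; rewrite IH. Qed.

Lemma walk_edges_cat x p1 p2 :
  walk_edges x (p1 ++ p2) = walk_edges x p1 ++ walk_edges (last x p1) p2.
Proof. by elim: p1 x => //= y p IH x; rewrite IH. Qed.

Lemma walk_edges_rcons x p y :
  walk_edges x (rcons p y) = rcons (walk_edges x p) [set last x p; y].
Proof. by rewrite -cats1 walk_edges_cat cats1. Qed.

Lemma walk_edgesP x p E : path e x p -> E \in walk_edges x p ->
  exists a b, [/\ e a b, a \in x :: p, b \in x :: p & E = [set a; b]].
Proof.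
elim: p x => //= y p IH x /andP[exy pp]; rewrite inE => /orP[/eqP->|].
  by exists x, y; rewrite !inE !eqxx orbT.
case/(IH _ pp)=> a [b [eab ap bp ->]]; exists a, b.
by split=> //; rewrite in_cons ?ap ?bp orbT.
Qed.

Lemma walk_edges_in_edges x p E :
  path e x p -> E \in walk_edges x p -> E \in edges e.
Proof.
by move=> pp /(walk_edgesP pp)[a [b [eab _ _ ->]]]; apply/edgesP; exists a, b.
Qed.

Lemma trail_size_le x p : trail x p -> size p <= #|edges e|.
Proof.
case/andP=> pp p_uniq; rewrite -(size_walk_edges x p) cardE.
by apply: uniq_leq_size => // E; rewrite mem_enum; apply: walk_edges_in_edges.
Qed.

Lemma odd_count_walk_edges x p (w : T) : path e x p ->
  odd (count (fun E : {set T} => w \in E) (walk_edges x p)) =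
  (x == w) (+) (last x p == w).
Proof.
elim: p x => /= [|y p IH] x; first by rewrite addbb.
case/andP=> /edge_neq xy pp; rewrite oddD oddb IH // !inE (eq_sym w x) (eq_sym w y).
have : ~~ ((x == w) && (y == w)) by apply: contra xy => /andP[/eqP-> /eqP->].
by case: (x == w); case: (y == w); case: (last y p == w).
Qed.

Lemma sum_alt_walk_edges x p v : path e x p -> uniq (walk_edges x p) ->
  (\sum_(E <- walk_edges x p | v \in E) (-1 : int) ^+ index E (walk_edges x p) =
   (x == v)%:R - (-1) ^+ size p * (last x p == v)%:R)%R.
Proof.
elim: p x => /= [|y p IH] x; first by rewrite big_nil expr0 mul1r subrr.
case/andP=> /edge_neq xy pp /andP[fresh p_uniq]; rewrite big_cons eqxx expr0.
have -> : (\sum_(E <- walk_edges y p | v \in E)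
    (-1 : int) ^+ (if [set x; y] == E then 0 else (index E (walk_edges y p)).+1) =
  - \sum_(E <- walk_edges y p | v \in E) (-1) ^+ index E (walk_edges y p))%R.
  rewrite -sumrN big_seq_cond [RHS]big_seq_cond; apply: eq_bigr => E /andP[Ep _].
  have /negbTE-> : [set x; y] != E by apply: contraNneq fresh => ->.
  by rewrite exprS mulN1r.
rewrite IH // !inE (eq_sym v x) (eq_sym v y) exprS.
have : ~~ ((x == v) && (y == v)) by apply: contra xy => /andP[/eqP-> /eqP->].
case: (x == v); case: (y == v); case: (last y p == v) => //= _; ring.
Qed.

Lemma euler_circuit_alt_labeling x p :
  trail x p -> last x p = x -> edges e =i walk_edges x p -> ~~ odd #|edges e| ->
  zero_M_cordial_labeling e (fun E => (-1 : int) ^+ index E (walk_edges x p))%R.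
Proof.
case/andP=> pp p_uniq closed cover even; split.
  by move=> E _; rewrite -signr_odd; case: odd; [right | left].
move=> v; rewrite /vertex_label (eq_bigl (fun E => (E \in walk_edges x p) && (v \in E)));
  last by move=> E; rewrite cover.
rewrite big_mkcondr -big_uniq // -big_mkcond /= sum_alt_walk_edges // closed.
have -> : size p = #|edges e|.
  by rewrite (eq_card cover) -(size_walk_edges x p); apply/esym/card_uniqP.
by rewrite -signr_odd (negbTE even) expr0 mul1r subrr.
Qed.

Lemma saturated_path_last_mem x p : path e x p -> saturated_walk x p ->
  forall z q, z \in x :: p -> path e z q -> last z q \in x :: p.
Proof.
move=> pp sat z q; elim: q z => //= a q IH z zp /andP[eza pq]; apply: IH pq.
have /(walk_edgesP pp)[b [c [_ bp cp Ebc]]] := sat _ _ zp eza.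
have : a \in [set b; c] by rewrite -Ebc !inE eqxx orbT.
by rewrite !inE => /orP[/eqP->|/eqP->].
Qed.

Lemma closed_walk_rot x p w : path e x p -> last x p = x -> w \in x :: p ->
  exists p', [/\ path e w p', last w p' = w,
                 perm_eq (walk_edges w p') (walk_edges x p) & size p' = size p].
Proof.
move=> pp closed; rewrite inE => /orP[/eqP-> | wp].
  by exists p; split=> //; apply: perm_refl.
move: pp closed; case/splitPr: wp => p1 p2.
rewrite cat_path last_cat /= => /and3P[pp1 ep1 pp2] closed.
exists (p2 ++ rcons p1 w); split.
- by rewrite cat_path pp2 closed rcons_path pp1 ep1.
- by rewrite last_cat last_rcons.
- rewrite (walk_edges_cat w p2) closed walk_edges_rcons walk_edges_cat /=.
  by rewrite perm_catC -cats1 -catA.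
- by rewrite !size_cat size_rcons /=; lia.
Qed.

Lemma closed_trail_extend x p w y :
  trail x p -> last x p = x -> w \in x :: p -> e w y ->
  [set w; y] \notin walk_edges x p -> exists p', trail w p' /\ size p' = (size p).+1.
Proof.
case/andP=> pp p_uniq closed wp ewy fresh.
have [p' [pp' closed' perm_p' size_p']] := closed_walk_rot pp closed wp.
exists (rcons p' y); rewrite /trail rcons_path walk_edges_rcons closed' rcons_uniq.
by rewrite pp' ewy (perm_mem perm_p') fresh (perm_uniq perm_p') p_uniq size_rcons size_p'.
Qed.

Section Eulerian.
Hypotheses (e_eulerian : eulerian e) (e_connected : connected_graph e).

Lemma trail_end_closed x p : trail x p ->
  (forall y, e (last x p) y -> [set last x p; y] \in walk_edges x p) -> last x p = x.
Proof.
case/andP=> pp p_uniq end_used; have := e_eulerian (last x p).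
rewrite (deg_eq_card_incident (fun E => walk_edges_in_edges pp) end_used).
rewrite card_in_uniq_count // odd_count_walk_edges // eqxx addbT negbK.
by move/eqP.
Qed.

Lemma saturated_walk_covers_edges x p :
  path e x p -> saturated_walk x p -> edges e =i walk_edges x p.
Proof.
move=> pp sat E; apply/idP/idP; last exact: walk_edges_in_edges.
case/edgesP=> a [b [eab ->]]; apply: (sat) eab.
have /connectP[q pq ->] := e_connected x a.
exact: saturated_path_last_mem pp sat _ _ (mem_head x p) pq.
Qed.

Lemma trail_extend_or_euler_circuit x p : trail x p ->
  (exists x' p', trail x' p' /\ size p < size p') \/
  (last x p = x /\ edges e =i walk_edges x p).
Proof.
move=> tr; have /andP[pp p_uniq] := tr.
case: (boolP [exists y, e (last x p) y && ([set last x p; y] \notin walk_edges x p)]).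
  case/existsP=> y /andP[ey fresh]; left; exists x, (rcons p y).
  by rewrite /trail rcons_path pp ey walk_edges_rcons rcons_uniq fresh p_uniq size_rcons.
move/existsPn=> end_used.
have closed : last x p = x.
  by apply: trail_end_closed tr _ => y ey; move: (end_used y); rewrite ey /= negbK.
case: (boolP [exists w, exists y,
    [&& w \in x :: p, e w y & [set w; y] \notin walk_edges x p]]).
  case/existsP=> w /existsP[y /and3P[wp ewy fresh]]; left.
  have [p' [tr' size_p']] := closed_trail_extend tr closed wp ewy fresh.
  by exists w, p'; rewrite size_p'.
move/existsPn=> sat; right; split=> //; apply: saturated_walk_covers_edges pp _.
by move=> w y wp ewy; move: (sat w) => /existsPn/(_ y); rewrite wp ewy /= negbK.
Qed.

Lemma euler_circuit_exists (x0 : T) :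
  exists x p, [/\ trail x p, last x p = x & edges e =i walk_edges x p].
Proof.
have : trail x0 [::] by [].
move: x0 [::] => x p tr; have [n] := ubnP (#|edges e| - size p).
elim: n x p tr => // n IH x p tr bound.
case: (trail_extend_or_euler_circuit tr) => [[x' [p' [tr' lt_p']]]|[closed cover]];
  last by exists x, p.
by apply: (IH _ _ tr'); have := trail_size_le tr'; lia.
Qed.

Lemma eulerian_even_zero_M_cordial : ~~ odd #|edges e| -> zero_M_cordial e.
Proof.
move=> even; case: (pickP (@predT T)) => [x0 _ | no_vertex].
  have [x [p [tr closed cover]]] := euler_circuit_exists x0.
  exists (fun E => (-1) ^+ index E (walk_edges x p))%R.
  exact: euler_circuit_alt_labeling tr closed cover even.
by exists (fun _ => 1%R); split=> [E _|v]; [left | have := no_vertex v].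
Qed.

End Eulerian.
End Graph.

Theorem theorem2 (T : finType) (e : rel T) :
  simple_graph e -> connected_graph e ->
  (zero_M_cordial e <-> (eulerian e /\ ~~ odd #|edges e|)).
Proof.
move=> [e_sym e_irr] e_connected; split=> [[f f_lab] | [e_eulerian even]].
  split; first exact: (zero_M_cordial_labeling_eulerian e_sym e_irr f_lab).
  exact: (zero_M_cordial_labeling_even_edges e_irr f_lab).
exact: (eulerian_even_zero_M_cordial e_sym e_irr e_eulerian e_connected even).
Qed.
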